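(* Let $P\in\Delta_{\mathcal{T},\mathcal{X},\mathcal{Y}}$ with $H_P(X)>0$ and $H_P(Y)>0$. If under $P$ both $T$ is independent of $X$ and $T$ is independent of $Y$, then $\arg\max_{Q\in\Delta_P}H_Q(T\mid X,Y)$ contains more than one element.
   Context: $T,X,Y$ are random variables with finite state spaces $\mathcal{T},\mathcal{X},\mathcal{Y}$; $\Delta_{\mathcal{T},\mathcal{X},\mathcal{Y}}$ is the set of all joint distributions on $\mathcal{T}\times\mathcal{X}\times\mathcal{Y}$. For $P\in\Delta_{\mathcal{T},\mathcal{X},\mathcal{Y}}$, $\Delta_P=\{Q\in\Delta_{\mathcal{T},\mathcal{X},\mathcal{Y}}: Q(X=x,T=t)=P(X=x,T=t),\ Q(Y=y,T=t)=P(Y=y,T=t)\ \forall x,y,t\}$. $H$ denotes Shannon entropy; $H_Q(T\mid X,Y)$ the conditional entropy under $Q$. *)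

From HB Require Import structures.
From mathcomp Require Import all_boot.
From Stdlib Require Import Reals.

Set Implicit Arguments.
Unset Strict Implicit.
Unset Printing Implicit Defensive.

Local Open Scope R_scope.

Definition rsum (I : finType) (F : I -> R) : R := \big[Rplus/0]_(i : I) F i.

Section Info.
Variables (T X Y : finType).

Definition is_dist (Q : T -> X -> Y -> R) : Prop :=
  (forall t x y, 0 <= Q t x y) /\
  rsum (fun t => rsum (fun x => rsum (fun y => Q t x y))) = 1.

Definition marg_T (Q : T -> X -> Y -> R) (t : T) : R :=
  rsum (fun x => rsum (fun y => Q t x y)).
Definition marg_X (Q : T -> X -> Y -> R) (x : X) : R :=
  rsum (fun t => rsum (fun y => Q t x y)).
Definition marg_Y (Q : T -> X -> Y -> R) (y : Y) : R :=
  rsum (fun t => rsum (fun x => Q t x y)).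
Definition marg_TX (Q : T -> X -> Y -> R) (t : T) (x : X) : R :=
  rsum (fun y => Q t x y).
Definition marg_TY (Q : T -> X -> Y -> R) (t : T) (y : Y) : R :=
  rsum (fun x => Q t x y).
Definition marg_XY (Q : T -> X -> Y -> R) (x : X) (y : Y) : R :=
  rsum (fun t => Q t x y).

Definition plogp (p : R) : R := if Rle_dec p 0 then 0 else p * ln p.

Definition entropy_X (Q : T -> X -> Y -> R) : R :=
  - rsum (fun x => plogp (marg_X Q x)).
Definition entropy_Y (Q : T -> X -> Y -> R) : R :=
  - rsum (fun y => plogp (marg_Y Q y)).

Definition cond_entropy_T_XY (Q : T -> X -> Y -> R) : R :=
  - rsum (fun t => rsum (fun x => rsum (fun y =>
      if Rle_dec (Q t x y) 0 then 0
      else Q t x y * ln (Q t x y / marg_XY Q x y)))).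

Definition DeltaP (P Q : T -> X -> Y -> R) : Prop :=
  is_dist Q /\
  (forall t x, marg_TX Q t x = marg_TX P t x) /\
  (forall t y, marg_TY Q t y = marg_TY P t y).

Definition in_argmax_condent (P Q : T -> X -> Y -> R) : Prop :=
  DeltaP P Q /\
  forall Q', DeltaP P Q' -> cond_entropy_T_XY Q' <= cond_entropy_T_XY Q.

Definition indep_TX (Q : T -> X -> Y -> R) : Prop :=
  forall t x, marg_TX Q t x = marg_T Q t * marg_X Q x.
Definition indep_TY (Q : T -> X -> Y -> R) : Prop :=
  forall t y, marg_TY Q t y = marg_T Q t * marg_Y Q y.

End Info.

(* Under T ⊥ X and T ⊥ Y, the marginal of T under any Q in Delta_P is that of P, so
   H_Q(T | X, Y) <= H_Q(T) = H_P(T) for all of Delta_P.  Conversely, for every coupling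
   r of the X- and Y-marginals, Q(t,x,y) = P(t) r(x,y) lies in Delta_P and has
   H_Q(T | X, Y) = H_P(T): every such Q is a maximiser.  Positive entropy of X and Y
   gives two atoms x1 <> x2 and y1 <> y2 of each marginal, and moving mass along the
   rectangle {x1,x2} x {y1,y2} turns the product coupling into a different one. *)
From HB Require Import structures.
From mathcomp Require Import all_boot.
From Stdlib Require Import Reals Lra Classical.

Set Implicit Arguments.
Unset Strict Implicit.
Unset Printing Implicit Defensive.

Local Open Scope R_scope.

Lemma Rplus_associative : associative Rplus.
Proof. by move=> a b c; rewrite Rplus_assoc. Qed.

HB.instance Definition _ :=
  Monoid.isComLaw.Build R 0 Rplus Rplus_associative Rplus_comm Rplus_0_l.

Section RealSums.
Variables I J : finType.

Lemma eq_rsum (F G : I -> R) : (forall i, F i = G i) -> rsum F = rsum G.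
Proof. by move=> eqFG; apply: eq_bigr => i _. Qed.

Lemma rsumD (F G : I -> R) : rsum (fun i => F i + G i) = rsum F + rsum G.
Proof. exact: big_split. Qed.

Lemma rsumZ (c : R) (F : I -> R) : rsum (fun i => c * F i) = c * rsum F.
Proof.
symmetry; apply: (big_endo (Rmult c)); last exact: Rmult_0_r.
by move=> u v; rewrite Rmult_plus_distr_l.
Qed.

Lemma rsumN (F : I -> R) : rsum (fun i => - F i) = - rsum F.
Proof. by rewrite (eq_rsum (G := fun i => -1 * F i)) ?rsumZ => [|i]; ring. Qed.

Lemma rsum0 : rsum (fun _ : I => 0) = 0.
Proof. exact: big1. Qed.

Lemma ler_rsum (F G : I -> R) : (forall i, F i <= G i) -> rsum F <= rsum G.
Proof.
move=> leFG; apply: (big_ind2 (fun u v => u <= v)) => [|u u' v v'|i _]; last exact: leFG.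
  exact: Rle_refl.
lra.
Qed.

Lemma rsum_ge0 (F : I -> R) : (forall i, 0 <= F i) -> 0 <= rsum F.
Proof. by move=> F_ge0; rewrite -rsum0; apply: ler_rsum. Qed.

Lemma rsumD1 (F : I -> R) (j : I) :
  rsum F = F j + \big[Rplus/0]_(i | i != j) F i.
Proof. exact: bigD1. Qed.

Lemma rsum_ge_term (F : I -> R) (j : I) : (forall i, 0 <= F i) -> F j <= rsum F.
Proof.
move=> F_ge0; rewrite (rsumD1 F j).
suff : 0 <= \big[Rplus/0]_(i | i != j) F i by lra.
apply: (big_ind (fun u => 0 <= u)) => [|u v|i _]; [lra|lra|exact: F_ge0].
Qed.

Lemma exchange_rsum (F : I -> J -> R) :
  rsum (fun i => rsum (F i)) = rsum (fun j => rsum (fun i => F i j)).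
Proof. exact: exchange_big. Qed.

End RealSums.

Definition prob_vector (I : finType) (F : I -> R) : Prop :=
  (forall i, 0 <= F i) /\ rsum F = 1.

Lemma prob_vector_le1 (I : finType) (F : I -> R) i : prob_vector F -> F i <= 1.
Proof. by move=> [F_ge0 <-]; apply: rsum_ge_term. Qed.

Lemma prob_vector_exists_pos (I : finType) (F : I -> R) :
  prob_vector F -> exists i, 0 < F i.
Proof.
move=> [F_ge0 sumF]; apply: NNPP => noPos.
suff : rsum F = 0 by lra.
rewrite -(rsum0 I); apply: eq_rsum => i.
have := F_ge0 i; have : ~ 0 < F i by move=> Fi_gt0; apply: noPos; exists i.
lra.
Qed.

Lemma rsum2_affine (I J : finType) (c d : R) (F G : I -> J -> R) :
  rsum (fun i => rsum (fun j => c * F i j + d * G i j)) =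
  c * rsum (fun i => rsum (F i)) + d * rsum (fun i => rsum (G i)).
Proof.
under eq_rsum => i do rewrite rsumD !rsumZ.
by rewrite rsumD !rsumZ.
Qed.

Lemma plogp_le0 p : p <= 0 -> plogp p = 0.
Proof. by rewrite /plogp; case: Rle_dec. Qed.

Lemma plogp_gt0 p : 0 < p -> plogp p = p * ln p.
Proof. by rewrite /plogp; case: Rle_dec => // p_le0 p_gt0; lra. Qed.

Lemma plogp1 : plogp 1 = 0.
Proof. by rewrite plogp_gt0 ?ln_1 ?Rmult_0_r //; lra. Qed.

Lemma entropy_gt0_two_atoms (I : finType) (F : I -> R) :
  prob_vector F -> 0 < - rsum (fun i => plogp (F i)) ->
  exists i j, [/\ i != j, 0 < F i & 0 < F j].
Proof.
move=> pF H_gt0; apply: NNPP => noPair.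
have [F_ge0 sumF] := pF; have [i Fi_gt0] := prob_vector_exists_pos pF.
have F_off_i j : j != i -> F j = 0.
  move=> ji; have := F_ge0 j; have : ~ 0 < F j.
    by move=> Fj_gt0; apply: noPair; exists i, j; rewrite eq_sym.
  lra.
have Fi1 : F i = 1.
  by rewrite -sumF (rsumD1 F i) big1 ?Rplus_0_r // => j /F_off_i.
suff : rsum (fun i => plogp (F i)) = 0 by lra.
rewrite (rsumD1 _ i) big1 ?Fi1 ?plogp1 ?Rplus_0_r // => j /F_off_i ->.
by apply: plogp_le0; apply: Rle_refl.
Qed.

(* Gibbs' inequality for a single term, from ln u <= u - 1 at u = p m / q. *)
Lemma neg_xlnx_ratio_le q p m : 0 < q -> 0 < p -> 0 < m ->
  - (q * ln (q / m)) <= - ln p * q - q + p * m.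
Proof.
move=> q_gt0 p_gt0 m_gt0.
have u_gt0 : 0 < p * m / q by apply: Rdiv_lt_0_compat => //; apply: Rmult_lt_0_compat.
have ln_le : ln (p * m / q) <= p * m / q - 1.
  by have := exp_ineq1_le (ln (p * m / q)); rewrite exp_ln //; lra.
have ln_ratio : ln (p * m / q) = ln p - ln (q / m).
  have inv_gt0 := Rinv_0_lt_compat.
  rewrite /Rdiv !ln_mult ?ln_Rinv //; try ring; auto using Rmult_lt_0_compat.
have qu : q * (p * m / q) = p * m by field; lra.
have := Rmult_le_compat_l q _ _ (Rlt_le _ _ q_gt0) ln_le.
rewrite ln_ratio; nra.
Qed.

Section ConditionalEntropy.
Variables T X Y : finType.
Implicit Types Q : T -> X -> Y -> R.

Lemma rsum2_marg_XY Q :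
  rsum (fun x => rsum (marg_XY Q x)) = rsum (fun t => rsum (fun x => rsum (Q t x))).
Proof.
rewrite /marg_XY; under eq_rsum => x do rewrite exchange_rsum.
by rewrite exchange_rsum.
Qed.

Lemma cond_entropy_le_entropy_T Q : is_dist Q ->
  cond_entropy_T_XY Q <= - rsum (fun t => plogp (marg_T Q t)).
Proof.
move=> [Q_ge0 sumQ]; set p := marg_T Q; set m := marg_XY Q.
have p_ge0 t : 0 <= p t by apply: rsum_ge0 => x; apply: rsum_ge0.
have sum_m : rsum (fun x => rsum (m x)) = 1 by rewrite /m rsum2_marg_XY.
have term_le t x y :
  - (if Rle_dec (Q t x y) 0 then 0 else Q t x y * ln (Q t x y / m x y)) <=
  (- ln (p t) - 1) * Q t x y + p t * m x y.
  have m_ge0 : 0 <= m x y by apply: rsum_ge0.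
  case: Rle_dec => [Q_le0|Q_nle0] /=.
    have -> : Q t x y = 0 by have := Q_ge0 t x y; lra.
    by have := Rmult_le_pos _ _ (p_ge0 t) m_ge0; lra.
  have Q_gt0 := Rnot_le_lt _ _ Q_nle0.
  have Q_le_p : Q t x y <= p t.
    apply: (Rle_trans _ (rsum (Q t x))); first exact: rsum_ge_term.
    by apply: (@rsum_ge_term _ (fun x => rsum (Q t x))) => x'; apply: rsum_ge0.
  have Q_le_m : Q t x y <= m x y by apply: rsum_ge_term => t'.
  have := neg_xlnx_ratio_le Q_gt0 (Rlt_le_trans _ _ _ Q_gt0 Q_le_p)
    (Rlt_le_trans _ _ _ Q_gt0 Q_le_m).
  lra.
rewrite /cond_entropy_T_XY -rsumN -rsumN; apply: ler_rsum => t.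
rewrite -rsumN; under eq_rsum => x do rewrite -rsumN.
apply: Rle_trans; first by apply: ler_rsum => x; apply: ler_rsum => y; apply: term_le.
rewrite rsum2_affine sum_m -/(marg_T Q t) -/(p t).
have [p_le0|p_nle0] := Rle_dec (p t) 0.
  have -> : p t = 0 by have := p_ge0 t; lra.
  by rewrite plogp_le0; [lra | apply: Rle_refl].
by rewrite plogp_gt0; [lra | apply: Rnot_le_lt].
Qed.

Lemma cond_entropy_indep (p : T -> R) (r : X -> Y -> R) :
  (forall t, 0 <= p t) -> rsum p = 1 ->
  (forall x y, 0 <= r x y) -> rsum (fun x => rsum (r x)) = 1 ->
  cond_entropy_T_XY (fun t x y => p t * r x y) = - rsum (fun t => plogp (p t)).
Proof.
move=> p_ge0 sum_p r_ge0 sum_r.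
have marg_r x y : marg_XY (fun t x y => p t * r x y) x y = r x y.
  rewrite /marg_XY (eq_rsum (G := fun t => r x y * p t)) => [|t]; last by ring.
  by rewrite rsumZ sum_p Rmult_1_r.
rewrite /cond_entropy_T_XY; congr (- _).
transitivity (rsum (fun t => plogp (p t) * rsum (fun x => rsum (r x)))); last first.
  by apply: eq_rsum => t; rewrite sum_r Rmult_1_r.
apply: eq_rsum => t; rewrite -rsumZ; apply: eq_rsum => x; rewrite -rsumZ.
apply: eq_rsum => y; rewrite marg_r.
have := p_ge0 t; have := r_ge0 x y.
case: Rle_dec => [pr_le0|/Rnot_le_lt pr_gt0] /= r_ge0' p_ge0'.
  have [->|->] : p t = 0 \/ r x y = 0.
    by apply: Rmult_integral; nra.
    by rewrite plogp_le0 ?Rmult_0_l //; apply: Rle_refl.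
  by ring.
have p_gt0 : 0 < p t by nra.
have r_gt0 : 0 < r x y by nra.
have -> : p t * r x y / r x y = p t by field; lra.
by rewrite plogp_gt0 //; ring.
Qed.

End ConditionalEntropy.

Definition kron (I : finType) (i0 i : I) : R := if i == i0 then 1 else 0.

Definition kron_diff (I : finType) (i1 i2 i : I) : R := kron i1 i - kron i2 i.

Lemma rsum_kron_diff (I : finType) (i1 i2 : I) : rsum (kron_diff i1 i2) = 0.
Proof.
have rsum_kron i0 : rsum (kron i0) = 1.
  by rewrite (rsumD1 _ i0) big1 /kron ?eqxx ?Rplus_0_r // => i /negbTE ->.
by rewrite /kron_diff /Rminus rsumD rsumN !rsum_kron Rplus_opp_r.
Qed.

Lemma kron_diff_cases (I : finType) (i1 i2 : I) : i1 != i2 -> forall i,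
  [\/ kron_diff i1 i2 i = 0, kron_diff i1 i2 i = 1 /\ i = i1
     | kron_diff i1 i2 i = -1 /\ i = i2].
Proof.
move=> i12 i; rewrite /kron_diff /kron.
have [->|ii1] := eqVneq i i1; first by rewrite (negbTE i12); constructor 2; split=> //; ring.
have [->|ii2] := eqVneq i i2; first by constructor 3; split=> //; ring.
by constructor 1; ring.
Qed.

Section Couplings.
Variables X Y : finType.

Definition coupling (a : X -> R) (b : Y -> R) (r : X -> Y -> R) : Prop :=
  [/\ forall x y, 0 <= r x y,
      forall x, rsum (r x) = a x &
      forall y, rsum (fun x => r x y) = b y].

Lemma coupling_mass a b r : prob_vector a -> coupling a b r ->
  rsum (fun x => rsum (r x)) = 1.
Proof. by move=> [_ sum_a] [_ r_a _]; rewrite (eq_rsum r_a). Qed.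

Lemma product_coupling a b : prob_vector a -> prob_vector b ->
  coupling a b (fun x y => a x * b y).
Proof.
move=> [a_ge0 sum_a] [b_ge0 sum_b]; split=> [x y|x|y].
- exact: Rmult_le_pos.
- by rewrite rsumZ sum_b Rmult_1_r.
- by rewrite (eq_rsum (G := fun x => b y * a x)) ?rsumZ ?sum_a => [|x]; ring.
Qed.

(* Moving mass along the rectangle {x1,x2} x {y1,y2} keeps the marginals and stays
   nonnegative while the amount is at most min (a x1 b y2, a x2 b y1); the amount
   a x1 a x2 b y1 b y2 qualifies because all masses are at most 1. *)
Definition rectangle_shift a b x1 x2 y1 y2 (x : X) (y : Y) : R :=
  a x * b y + a x1 * a x2 * b y1 * b y2 * (kron_diff x1 x2 x * kron_diff y1 y2 y).

Lemma rectangle_shift_coupling a b x1 x2 y1 y2 :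
  prob_vector a -> prob_vector b -> x1 != x2 -> y1 != y2 ->
  coupling a b (rectangle_shift a b x1 x2 y1 y2).
Proof.
move=> pa pb x12 y12; have [_ prod_a prod_b] := product_coupling pa pb.
rewrite /rectangle_shift; set c := a x1 * a x2 * b y1 * b y2.
split=> [x y|x|y].
- have [a_ge0 _] := pa; have [b_ge0 _] := pb.
  have ab_ge0 i j : 0 <= a i * b j by apply: Rmult_le_pos.
  have ab_le1 i j : a i * b j <= 1.
    have := a_ge0 i; have := b_ge0 j.
    by have := prob_vector_le1 i pa; have := prob_vector_le1 j pb; nra.
  have c_le_12 : c <= a x1 * b y2 by rewrite /c; have := ab_le1 x2 y1; have := ab_ge0 x1 y2; nra.
  have c_le_21 : c <= a x2 * b y1 by rewrite /c; have := ab_le1 x1 y2; have := ab_ge0 x2 y1; nra.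
  have c_ge0 : 0 <= c by rewrite /c; have := ab_ge0 x1 y2; have := ab_ge0 x2 y1; nra.
  have := ab_ge0 x y.
  case: (kron_diff_cases x12 x) => [->|[-> ->]|[-> ->]];
  case: (kron_diff_cases y12 y) => [->|[-> ->]|[-> ->]]; nra.
- rewrite rsumD prod_a (eq_rsum (G := fun y => c * kron_diff x1 x2 x * kron_diff y1 y2 y)).
    by rewrite rsumZ rsum_kron_diff; ring.
  by move=> y; ring.
- rewrite rsumD prod_b (eq_rsum (G := fun x => c * kron_diff y1 y2 y * kron_diff x1 x2 x)).
    by rewrite rsumZ rsum_kron_diff; ring.
  by move=> x; ring.
Qed.

End Couplings.

Section Maximisers.
Variables (T X Y : finType) (P : T -> X -> Y -> R).
Hypotheses (distP : is_dist P) (indepTX : indep_TX P) (indepTY : indep_TY P).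

Lemma prob_vector_marg_T : prob_vector (marg_T P).
Proof.
have [P_ge0 sumP] := distP.
by split=> // t; apply: rsum_ge0 => x; apply: rsum_ge0.
Qed.

Lemma prob_vector_marg_X : prob_vector (marg_X P).
Proof.
have [P_ge0 sumP] := distP.
split=> [x|]; first by apply: rsum_ge0 => t; apply: rsum_ge0.
by rewrite /marg_X exchange_rsum.
Qed.

Lemma prob_vector_marg_Y : prob_vector (marg_Y P).
Proof.
have [P_ge0 sumP] := distP.
split=> [y|]; first by apply: rsum_ge0 => t; apply: rsum_ge0.
rewrite /marg_Y; under eq_rsum => y do rewrite exchange_rsum.
by rewrite -exchange_rsum; apply: etrans (rsum2_marg_XY P) sumP.
Qed.

Lemma DeltaP_marg_T Q t : DeltaP P Q -> marg_T Q t = marg_T P t.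
Proof. by move=> [_ [eqTX _]]; apply: eq_rsum => x; apply: eqTX. Qed.

Lemma coupling_in_argmax r : coupling (marg_X P) (marg_Y P) r ->
  in_argmax_condent P (fun t x y => marg_T P t * r x y).
Proof.
move=> rc; have [r_ge0 r_a r_b] := rc.
have [pT_ge0 sum_pT] := prob_vector_marg_T.
have sum_r := coupling_mass prob_vector_marg_X rc.
have inDelta : DeltaP P (fun t x y => marg_T P t * r x y).
  split; [split|split] => [t x y|||].
  - exact: Rmult_le_pos.
  - rewrite -sum_pT; apply: eq_rsum => t.
    by rewrite (eq_rsum (fun x => rsumZ _ (r x))) rsumZ sum_r Rmult_1_r.
  - by move=> t x; rewrite indepTX /marg_TX rsumZ r_a.
  - by move=> t y; rewrite indepTY /marg_TY rsumZ r_b.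
split=> // Q inDeltaQ.
rewrite cond_entropy_indep //.
under eq_rsum => t do rewrite -(DeltaP_marg_T t inDeltaQ).
by apply: cond_entropy_le_entropy_T; case: inDeltaQ.
Qed.

End Maximisers.

Theorem mainTheorem10 (T X Y : finType) (P : T -> X -> Y -> R) :
  is_dist P ->
  0 < entropy_X P ->
  0 < entropy_Y P ->
  indep_TX P ->
  indep_TY P ->
  exists Q1 Q2 : T -> X -> Y -> R,
    in_argmax_condent P Q1 /\ in_argmax_condent P Q2 /\
    exists t x y, Q1 t x y <> Q2 t x y.
Proof.
move=> distP HX_gt0 HY_gt0 indepTX indepTY.
have pX := prob_vector_marg_X distP; have pY := prob_vector_marg_Y distP.
have [x1 [x2 [x12 ax1 ax2]]] := entropy_gt0_two_atoms pX HX_gt0.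
have [y1 [y2 [y12 by1 by2]]] := entropy_gt0_two_atoms pY HY_gt0.
have [t0 pt0] := prob_vector_exists_pos (prob_vector_marg_T distP).
set a := marg_X P in ax1 ax2 pX *; set b := marg_Y P in by1 by2 pY *.
exists (fun t x y => marg_T P t * (a x * b y)),
       (fun t x y => marg_T P t * rectangle_shift a b x1 x2 y1 y2 x y).
split; [|split].
- exact/coupling_in_argmax/product_coupling.
- exact/coupling_in_argmax/rectangle_shift_coupling.
- exists t0, x1, y1; rewrite /rectangle_shift /kron_diff /kron.
  rewrite !eqxx (negbTE x12) (negbTE y12) => eqQ.
  have : 0 < marg_T P t0 * (a x1 * a x2 * b y1 * b y2).
    by repeat apply: Rmult_lt_0_compat.
  nra.
Qed.
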